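(* Let $r\ge2$ and $p\ge2$ be integers, let $\mathcal{A}$ be the adjacency tensor of an $r$-uniform (possibly weighted) hypergraph on $n$ vertices, and let $f(\mathbf{x})=(r-1)!\,\mathcal{A}\mathbf{x}^r/\|\mathbf{x}\|_p^r$ for $\mathbf{x}\neq0$. Let $\mathbf{x}_k\in\mathbb{R}^n$ with $\|\mathbf{x}_k\|_2=1$, $\mathbf{p}_k\in\mathbb{R}^n$, and for $\alpha>0$ let $$\mathbf{x}_{k+1}(\alpha)=\frac{[(2-\alpha\mathbf{x}_k^\top\mathbf{p}_k)^2-\|\alpha\mathbf{p}_k\|^2]\mathbf{x}_k+4\alpha\mathbf{p}_k}{4+\|\alpha\mathbf{p}_k\|^2-(\alpha\mathbf{x}_k^\top\mathbf{p}_k)^2}.$$ Writing $f'(\alpha)$ for the derivative of $\alpha\mapsto f(\mathbf{x}_{k+1}(\alpha))$, we have $$\alpha f'(\alpha)=-\nabla f(\mathbf{x}_{k+1}(\alpha))^\top\mathbf{x}_k.$$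
   Context: For a weighted $r$-uniform hypergraph $G=(V,E)$ with $V=\{1,\dots,n\}$ and edge weights $s(e)>0$, the adjacency tensor $\mathcal{A}=(a_{i_1\cdots i_r})$ is the symmetric order-$r$, dimension-$n$ tensor with $a_{i_1\cdots i_r}=s(e)/(r-1)!$ if $\{i_1,\dots,i_r\}=e\in E$ and $0$ otherwise. $\mathcal{A}\mathbf{x}^r=\sum_{i_1,\dots,i_r}a_{i_1\cdots i_r}x_{i_1}\cdots x_{i_r}$ and $(\mathcal{A}\mathbf{x}^{r-1})_i=\sum_{i_2,\dots,i_r}a_{ii_2\cdots i_r}x_{i_2}\cdots x_{i_r}$. $\|\mathbf{x}\|_p=(\sum_i|x_i|^p)^{1/p}$ and $\|\cdot\|$ is the Euclidean norm. The gradient is $\nabla f(\mathbf{x})=\frac{r!}{\|\mathbf{x}\|_p^r}\big(\mathcal{A}\mathbf{x}^{r-1}-\mathcal{A}\mathbf{x}^r\|\mathbf{x}\|_p^{-p}\mathbf{x}^{\langle p-1\rangle}\big)$, where $(\mathbf{x}^{\langle p-1\rangle})_i=|x_i|^{p-1}\mathrm{sgn}(x_i)$. The vector $\mathbf{x}_{k+1}(\alpha)$ is a unit vector. *)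

From HB Require Import structures.
From mathcomp Require Import all_boot all_order all_algebra.
From mathcomp Require Import all_classical all_reals all_analysis.
Set Implicit Arguments. Unset Strict Implicit. Unset Printing Implicit Defensive.
Import Order.TTheory GRing.Theory Num.Theory.
Local Open Scope ring_scope.

Section Defs.
Variables (R : realType) (n : nat).
Notation vec := ('I_n -> R).

Definition vdot (x y : vec) : R := \sum_(i < n) x i * y i.
Definition norm2 (x : vec) : R := Num.sqrt (vdot x x).
Definition vscale (a : R) (x : vec) : vec := fun i => a * x i.
Definition vadd (x y : vec) : vec := fun i => x i + y i.

Definition normp (p : nat) (x : vec) : R :=
  powR (\sum_(i < n) `|x i| ^+ p) (p%:R)^-1.

Definition powsgn (p : nat) (x : vec) : vec :=
  fun i => `|x i| ^+ (p - 1) * Num.sg (x i).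

Definition is_weighted_uniform_hypergraph (r : nat)
    (E : {set {set 'I_n}}) (s : {set 'I_n} -> R) : Prop :=
  forall e, e \in E -> #|e| = r /\ 0 < s e.

Definition adj_entry (r : nat) (E : {set {set 'I_n}}) (s : {set 'I_n} -> R)
    (idx : seq 'I_n) : R :=
  if (size idx == r) && ([set i in idx] \in E)
  then s [set i in idx] / (r.-1)`!%:R else 0.

Definition tens_form (r : nat) E s (x : vec) : R :=
  \sum_(t : r.-tuple 'I_n) adj_entry r E s (tval t) * \prod_(j <- tval t) x j.

Definition tens_vec (r : nat) E s (x : vec) : vec := fun i =>
  \sum_(t : r.-1.-tuple 'I_n) adj_entry r E s (i :: tval t) * \prod_(j <- tval t) x j.

Definition fobj (r p : nat) E s (x : vec) : R :=
  (r.-1)`!%:R * tens_form r E s x / (normp p x) ^+ r.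

Definition gradf (r p : nat) E s (x : vec) : vec := fun i =>
  r`!%:R / (normp p x) ^+ r *
  (tens_vec r E s x i - tens_form r E s x * (normp p x) ^- p * powsgn p x i).

Definition xnext (xk pk : vec) (a : R) : vec := fun i =>
  (((2 - a * vdot xk pk) ^+ 2 - (norm2 (vscale a pk)) ^+ 2) * xk i + 4 * a * pk i)
  / (4 + (norm2 (vscale a pk)) ^+ 2 - (a * vdot xk pk) ^+ 2).

End Defs.

From HB Require Import structures.
From mathcomp Require Import all_boot all_order all_algebra.
From mathcomp Require Import all_classical all_reals all_analysis.
From mathcomp Require Import ring lra.
Set Implicit Arguments. Unset Strict Implicit. Unset Printing Implicit Defensive.
Import Order.TTheory GRing.Theory Num.Theory.
Local Open Scope ring_scope.

(* The curve [x(a) := xnext xk pk a] stays on the unit sphere, and a direct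
   computation shows that [xk] is a combination [c x(a) - a x'(a)].  Since [f]
   is homogeneous of degree 0, Euler's identity gives [grad f(x) . x = 0], so
   by the chain rule [a f'(a) = a grad f(x(a)) . x'(a) = - grad f(x(a)) . xk].
   The chain rule is computed by hand: along a curve [y], the derivative of
   [A y^r] is [r (A y^(r-1)) . y'] because the adjacency tensor is symmetric,
   and that of [||y||_p^p] is [p y^<p-1> . y'], [|t|^p] being differentiable
   for [p >= 2]. *)

Section ProductRule.
Variables (R : comRingType) (I : Type).

Fixpoint prod_deriv (Y Y' : I -> R) (s : seq I) : R :=
  if s is i :: s' then Y' i * \prod_(j <- s') Y j + Y i * prod_deriv Y Y' s'
  else 0.

End ProductRule.

Section SymmetricTupleSums.
Variables (R : comRingType) (n : nat).

Lemma sum_tuple_cons m (F : seq 'I_n -> R) :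
  \sum_(t : m.+1.-tuple 'I_n) F t = \sum_(i < n) \sum_(u : m.-tuple 'I_n) F (i :: u).
Proof.
rewrite pair_big /=.
rewrite (reindex (fun iu : 'I_n * m.-tuple 'I_n => [tuple of iu.1 :: iu.2])) //=.
exists (fun t : m.+1.-tuple 'I_n => (thead t, [tuple of behead t])).
  by move=> [i u] _; rewrite /= theadE; congr pair; apply: val_inj.
by move=> t _; rewrite /= -tuple_eta.
Qed.

(* By the symmetry of [c], each of the [m.+1] positions of the tuple
   contributes the same amount. *)
Lemma sum_tuple_prod_deriv (Y Y' : 'I_n -> R) m (c : seq 'I_n -> R) :
  (forall s s', perm_eq s s' -> c s = c s') ->
  \sum_(t : m.+1.-tuple 'I_n) c t * prod_deriv Y Y' t =
  m.+1%:R * \sum_(i < n) Y' i * \sum_(u : m.-tuple 'I_n) c (i :: u) * \prod_(j <- u) Y j.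
Proof.
elim: m c => [|m IHm] c c_perm;
  rewrite (sum_tuple_cons _ (fun t => c t * prod_deriv Y Y' t)).
  rewrite mul1r; apply: eq_bigr => i _; rewrite big_distrr; apply: eq_bigr => u _.
  by rewrite (tuple0 u) /= mulr0 addr0 mulrCA.
have c_cons i : forall s s', perm_eq s s' -> c (i :: s) = c (i :: s').
  by move=> s s' ss'; apply: c_perm; rewrite perm_cons.
have tail_terms :
    \sum_(i < n) \sum_(u : m.+1.-tuple 'I_n) c (i :: u) * (Y i * prod_deriv Y Y' u)
    = m.+1%:R * \sum_(j < n) Y' j *
        \sum_(u : m.+1.-tuple 'I_n) c (j :: u) * \prod_(k <- u) Y k.
  transitivity (\sum_(i < n) Y i * (m.+1%:R * \sum_(j < n) Y' j *
      \sum_(v : m.-tuple 'I_n) c (i :: j :: v) * \prod_(k <- v) Y k)).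
    apply: eq_bigr => i _; rewrite -(IHm (fun s => c (i :: s))); last exact: c_cons.
    by rewrite mulr_sumr; apply: eq_bigr => u _; rewrite mulrCA.
  under eq_bigr do rewrite mulrCA; rewrite -mulr_sumr; congr (_ * _).
  under eq_bigr do rewrite mulr_sumr.
  rewrite exchange_big /=; apply: eq_bigr => j _.
  rewrite (sum_tuple_cons _ (fun u => c (j :: u) * \prod_(k <- u) Y k)) !mulr_sumr.
  apply: eq_bigr => i _; rewrite mulrA !mulr_sumr; apply: eq_bigr => v _.
  rewrite big_cons (c_perm (i :: j :: v) (j :: i :: v)) ?(perm_catCA [:: i] [:: j]) //.
  ring.
under eq_bigr do under eq_bigr do rewrite mulrDr.
under eq_bigr do rewrite big_split /=.
rewrite big_split /= tail_terms [in RHS]mulrSr mulrDl mul1r addrC; congr (_ + _).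
by apply: eq_bigr => i _; rewrite mulr_sumr; apply: eq_bigr => u _; rewrite mulrCA.
Qed.

End SymmetricTupleSums.

Section RealDerivatives.
Variable R : realType.
Implicit Types (f : R -> R) (x : R).

Lemma is_derive_mul f g x df dg : is_derive x 1 f df -> is_derive x 1 g dg ->
  is_derive x 1 (fun a => f a * g a) (f x * dg + g x * df).
Proof. exact: is_deriveM. Qed.

Lemma is_derive_exprn f x df m : is_derive x 1 f df ->
  is_derive x 1 (fun a => f a ^+ m) (m%:R * f x ^+ m.-1 * df).
Proof. by move=> /(is_deriveX m); rewrite -exprfctE. Qed.

Lemma is_derive_big (I : Type) (s : seq I) (P : pred I) (F : I -> R -> R)
    (dF : I -> R) x :
  (forall i, P i -> is_derive x 1 (F i) (dF i)) ->
  is_derive x 1 (fun a => \sum_(i <- s | P i) F i a) (\sum_(i <- s | P i) dF i).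
Proof.
move=> dFF; rewrite -fct_sumE.
by elim/big_ind2: _ => // *; [exact: is_derive_cst | exact: is_deriveD].
Qed.

Lemma is_derive_bigprod (I : Type) (s : seq I) (F : I -> R -> R) (dF : I -> R) x :
  (forall i, is_derive x 1 (F i) (dF i)) ->
  is_derive x 1 (fun a => \prod_(i <- s) F i a) (prod_deriv (F^~ x) dF s).
Proof.
move=> dFF; elim: s => [|i s IHs] /=.
  by under eq_fun do rewrite big_nil; exact: is_derive_cst.
under eq_fun do rewrite big_cons.
by apply: is_derive_eq (is_derive_mul (dFF i) IHs) _; rewrite addrC mulrC.
Qed.

Lemma is_derive_sqr_error f x d C :
  (forall z, `|f z - f x - d * (z - x)| <= C * (z - x) ^+ 2) -> is_derive x 1 f d.
Proof.
move=> err_le; apply/is_derive1_caratheodory.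
exists (fun z => if z == x then d else (f z - f x) / (z - x)); split.
- move=> z; case: eqP => [->|/eqP zx]; first by rewrite !subrr mulr0.
  by rewrite divfK // subr_eq0.
- apply/cvgrPdist_lt => e e0; rewrite eqxx nearE; apply/nbhs_ballP.
  exists (e / (`|C| + 1)) => /=; first by rewrite divr_gt0 // ltr_pwDr.
  move=> z; rewrite /ball /= distrC => xz_lt.
  case: eqP => [_|/eqP zx]; first by rewrite subrr normr0.
  have zx_gt0 : 0 < `|z - x| by rewrite normr_gt0 subr_eq0.
  have -> : d - (f z - f x) / (z - x) = - ((f z - f x - d * (z - x)) / (z - x)).
    by field; rewrite subr_eq0.
  rewrite normrN normf_div ltr_pdivrMr //.
  apply: (le_lt_trans (err_le z)); apply: (le_lt_trans (ler_norm _)).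
  rewrite normrM normrX expr2 mulrA ltr_pM2r //.
  move: xz_lt; rewrite ltr_pdivlMr ?ltr_pwDr // => xz_lt.
  by apply: le_lt_trans xz_lt; rewrite mulrDr mulr1 ler_wpDr // mulrC.
- by rewrite eqxx.
Qed.

Lemma is_derive_quadratic (c0 c1 c2 x : R) :
  is_derive x 1 (fun a => c0 + c1 * a + c2 * a ^+ 2) (c1 + 2 * c2 * x).
Proof.
apply: (@is_derive_sqr_error _ _ _ `|c2|) => z.
suff -> : c0 + c1 * z + c2 * z ^+ 2 - (c0 + c1 * x + c2 * x ^+ 2) -
    (c1 + 2 * c2 * x) * (z - x) = c2 * (z - x) ^+ 2.
  by rewrite normrM normrX real_normK ?num_real.
by ring.
Qed.

Lemma is_derive_mul_normr x : is_derive x 1 (fun y => y * `|y|) (2 * `|x|).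
Proof.
apply: (@is_derive_sqr_error _ _ _ 2) => z.
rewrite ler_norml; have := sqr_ge0 (z - x); rewrite !expr2.
by have [z0|z0] := leP 0 z; have [x0|x0] := leP 0 x;
  rewrite ?(ger0_norm z0) ?(ltr0_norm z0) ?(ger0_norm x0) ?(ltr0_norm x0) => ?;
  apply/andP; split; nra.
Qed.

(* Both powers are proved together: each one is [y] times the other one at
   the previous exponent. *)
Lemma is_derive_normrX k (x : R) :
  is_derive x 1 (fun y => `|y| ^+ k.+2) (k.+2%:R * (`|x| ^+ k.+1 * Num.sg x)) /\
  is_derive x 1 (fun y => `|y| ^+ k.+2 * Num.sg y) (k.+2%:R * `|x| ^+ k.+1).
Proof.
have sg_norm (y : R) : Num.sg y * `|y| = y by rewrite -numEsg.
have norm_sg (y : R) : y * Num.sg y = `|y| by rewrite mulrC -normrEsg.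
elim: k => [|k [IHabs IHsg]].
  split.
    under eq_fun do rewrite real_normK ?num_real // expr2.
    apply: is_derive_eq (is_derive_mul (is_derive_id x 1) (is_derive_id x 1)) _.
    by rewrite -[in LHS](sg_norm x) /=; ring.
  under eq_fun do rewrite expr2 -mulrA [_ * Num.sg _]mulrC sg_norm mulrC.
  by apply: is_derive_eq (is_derive_mul_normr x) _; rewrite expr1.
split.
  have absE (y : R) : `|y| ^+ k.+3 = y * (`|y| ^+ k.+2 * Num.sg y).
    by rewrite mulrCA norm_sg mulrC -exprS.
  under eq_fun do rewrite absE.
  apply: is_derive_eq (is_derive_mul (is_derive_id x 1) IHsg) _.
  rewrite -{1}(sg_norm x) /= !exprS; move: (`|x| ^+ k) => P; ring.
have sgE (y : R) : `|y| ^+ k.+3 * Num.sg y = y * `|y| ^+ k.+2.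
  by rewrite exprS mulrAC [`|y| * _]mulrC sg_norm.
under eq_fun do rewrite sgE.
apply: is_derive_eq (is_derive_mul (is_derive_id x 1) IHabs) _.
by rewrite /= mulrCA [x * _]mulrCA norm_sg !exprS; move: (`|x| ^+ k) => P; ring.
Qed.

End RealDerivatives.

Section VectorAlgebra.
Variables (R : realType) (n : nat).
Implicit Types (x u v : 'I_n -> R).

Lemma vdotC u v : vdot u v = vdot v u.
Proof. by apply: eq_bigr => i _; rewrite mulrC. Qed.

Lemma norm2_sqr x : norm2 x ^+ 2 = vdot x x.
Proof. by rewrite sqr_sqrtr // sumr_ge0 // => i _; rewrite -expr2 sqr_ge0. Qed.

Lemma vdot_self_neq0 x : vdot x x != 0 -> exists i, x i != 0.
Proof.
move=> xx_neq0; apply/existsP; apply: contraNT xx_neq0 => /existsPn x_eq0.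
by rewrite /vdot big1 // => i _; move/negPn/eqP: (x_eq0 i) => ->; rewrite mulr0.
Qed.

Lemma sum_sqr_lin (A B : R) u v :
  \sum_i (A * u i + B * v i) ^+ 2 =
  A ^+ 2 * vdot u u + 2 * A * B * vdot u v + B ^+ 2 * vdot v v.
Proof. by rewrite /vdot !mulr_sumr -!big_split /=; apply: eq_bigr => i _; ring. Qed.

End VectorAlgebra.

Section ObjectiveCalculus.
Variables (R : realType) (n : nat) (E : {set {set 'I_n}}) (s : {set 'I_n} -> R).
Implicit Types (a : R) (x dy : 'I_n -> R) (y : R -> 'I_n -> R).

Lemma adj_entry_perm r s1 s2 :
  perm_eq s1 s2 -> adj_entry r E s s1 = adj_entry r E s s2.
Proof.
move=> s12; rewrite /adj_entry (perm_size s12).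
suff -> : [set i in s1] = [set i in s2] by [].
by apply/setP => i; rewrite !inE (perm_mem s12).
Qed.

Lemma vdot_tens_vec r x : vdot x (tens_vec r.+1 E s x) = tens_form r.+1 E s x.
Proof.
rewrite /tens_form.
rewrite (sum_tuple_cons _ (fun t => adj_entry r.+1 E s t * \prod_(j <- t) x j)).
apply: eq_bigr => i _; rewrite /tens_vec mulr_sumr; apply: eq_bigr => u _.
by rewrite big_cons mulrCA mulrA.
Qed.

Lemma is_derive_tens_form r y dy a :
  (forall i, is_derive a 1 (y^~ i) (dy i)) ->
  is_derive a 1 (fun b => tens_form r.+1 E s (y b))
    (r.+1%:R * vdot dy (tens_vec r.+1 E s (y a))).
Proof.
move=> y_dy; apply: is_derive_eq.
  apply: is_derive_big => t _.
  exact: is_derive_mul (is_derive_cst _ _ _) (is_derive_bigprod _ y_dy).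
under eq_bigr do rewrite mulr0 addr0.
by rewrite (sum_tuple_prod_deriv _ _ _ (@adj_entry_perm r.+1)).
Qed.

Lemma vdot_powsgn p x : vdot (powsgn p.+1 x) x = \sum_(i < n) `|x i| ^+ p.+1.
Proof.
by apply: eq_bigr => i _; rewrite /powsgn subn1 /= -mulrA -normrEsg -exprSr.
Qed.

Lemma normpX p x : normp p.+1 x ^+ p.+1 = \sum_(i < n) `|x i| ^+ p.+1.
Proof.
rewrite /normp -powR_mulrn ?powR_ge0 // -powRrM mulVf ?pnatr_eq0 //.
by rewrite powRr1 // sumr_ge0 // => i _; rewrite exprn_ge0.
Qed.

Lemma sum_normrX_gt0 p x : (exists i, x i != 0) -> 0 < \sum_(i < n) `|x i| ^+ p.
Proof.
case=> i xi_neq0; rewrite (bigD1 i) //= ltr_pwDl ?exprn_gt0 ?normr_gt0 //.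
by rewrite sumr_ge0 // => j _; rewrite exprn_ge0.
Qed.

Lemma is_derive_sum_normrX p y dy a :
  (forall i, is_derive a 1 (y^~ i) (dy i)) ->
  is_derive a 1 (fun b => \sum_(i < n) `|y b i| ^+ p.+2)
    (p.+2%:R * vdot (powsgn p.+2 (y a)) dy).
Proof.
move=> y_dy; apply: is_derive_eq.
  apply: is_derive_big => i _.
  exact: is_derive1_comp (is_derive_normrX p (y a i)).1 (y_dy i).
by rewrite /vdot mulr_sumr; apply: eq_bigr => i _; rewrite -mulrA.
Qed.

Lemma is_derive_normp p y dy a :
  (exists i, y a i != 0) -> (forall i, is_derive a 1 (y^~ i) (dy i)) ->
  is_derive a 1 (fun b => normp p.+2 (y b))
    (normp p.+2 (y a) / (\sum_(i < n) `|y a i| ^+ p.+2) * vdot (powsgn p.+2 (y a)) dy).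
Proof.
move=> ya_neq0 y_dy; have S_gt0 := sum_normrX_gt0 p.+2 ya_neq0.
apply: is_derive_eq.
  exact: is_derive1_comp (is_derive1_powR _ S_gt0) (is_derive_sum_normrX p y_dy).
rewrite /normp powRB ?powRr1 ?(ltW S_gt0) ?(gt_eqF S_gt0) ?implybT //.
by rewrite mulrAC mulKf ?pnatr_eq0 // mulrC.
Qed.

Lemma vdot_gradf r p x dy : vdot (gradf r p E s x) dy =
  r`!%:R / normp p x ^+ r * (vdot (tens_vec r E s x) dy -
    tens_form r E s x * normp p x ^- p * vdot (powsgn p x) dy).
Proof.
rewrite /vdot /gradf mulrBr !mulr_sumr -sumrB; apply: eq_bigr => i _.
by rewrite mulrBr mulrBl -!mulrA.
Qed.

Lemma is_derive_fobj r p y dy a :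
  (exists i, y a i != 0) -> (forall i, is_derive a 1 (y^~ i) (dy i)) ->
  is_derive a 1 (fun b => fobj r.+1 p.+2 E s (y b))
    (vdot (gradf r.+1 p.+2 E s (y a)) dy).
Proof.
move=> ya_neq0 y_dy; have S_gt0 := sum_normrX_gt0 p.+2 ya_neq0.
have N_gt0 : 0 < normp p.+2 (y a) by apply: powR_gt0.
have NX_neq0 : normp p.+2 (y a) ^+ r.+1 != 0 by rewrite expf_neq0 ?gt_eqF.
have dNX := is_derive_exprn r.+1 (is_derive_normp p ya_neq0 y_dy).
have dT := is_derive_mul (is_derive_cst (r`!%:R : R) a 1) (is_derive_tens_form r y_dy).
have dNXV := @is_deriveV _ (fun b => normp p.+2 (y b) ^+ r.+1) a _ 1 NX_neq0 dNX.
have dF := is_derive_mul dT dNXV.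
rewrite /fobj /=; apply: is_derive_eq dF _.
rewrite vdot_gradf -normpX [vdot dy _]vdotC factS natrM /GRing.scale /= !exprS.
have N_neq0 : normp p.+2 (y a) != 0 by rewrite gt_eqF.
move: (expf_neq0 r N_neq0) (expf_neq0 p N_neq0).
move: (normp p.+2 (y a) ^+ r) (normp p.+2 (y a) ^+ p) => Nr Np Nr_neq0 Np_neq0.
by field; rewrite N_neq0 Nr_neq0 Np_neq0.
Qed.

Lemma vdot_gradf_self r p x :
  (exists i, x i != 0) -> vdot (gradf r.+1 p.+1 E s x) x = 0.
Proof.
move=> x_neq0; have N_gt0 : 0 < normp p.+1 x by apply/powR_gt0/sum_normrX_gt0.
rewrite vdot_gradf vdotC vdot_tens_vec vdot_powsgn -normpX.
by rewrite divfK ?subrr ?mulr0 // expf_neq0 // gt_eqF.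
Qed.

End ObjectiveCalculus.

Section NextIterate.
Variables (R : realType) (n : nat) (xk pk : 'I_n -> R).
Hypothesis unit_xk : vdot xk xk = 1.
Local Notation t := (vdot xk pk).
Local Notation d := (vdot pk pk - vdot xk pk ^+ 2).

Definition xnext_num (a : R) i := (4 - 4 * a * t - a ^+ 2 * d) * xk i + 4 * a * pk i.

Definition xnext_den (a : R) := 4 + a ^+ 2 * d.

Definition dxnext (a : R) i :=
  ((4 * pk i - 4 * t * xk i - 2 * a * d * xk i) * xnext_den a
     - xnext_num a i * (2 * a * d)) / xnext_den a ^+ 2.

Lemma xnextE a i : xnext xk pk a i = xnext_num a i / xnext_den a.
Proof.
have normE : norm2 (vscale a pk) ^+ 2 = a ^+ 2 * vdot pk pk.
  by rewrite norm2_sqr /vdot mulr_sumr; apply: eq_bigr => j _; rewrite /vscale; ring.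
by rewrite /xnext normE /xnext_num /xnext_den; congr (_ / _); ring.
Qed.

Lemma xnext_den_gt0 a : 0 < xnext_den a.
Proof.
have d_ge0 : 0 <= d.
  have := sum_sqr_lin 1 (- t) pk xk; rewrite unit_xk [vdot pk xk]vdotC => dE.
  have -> : d = \sum_i (1 * pk i + - t * xk i) ^+ 2 by rewrite dE; ring.
  by rewrite sumr_ge0 // => i _; rewrite sqr_ge0.
by rewrite /xnext_den ltr_pwDl // mulr_ge0 // sqr_ge0.
Qed.

Lemma vdot_xnext a : vdot (xnext xk pk a) (xnext xk pk a) = 1.
Proof.
have den_neq0 := lt0r_neq0 (xnext_den_gt0 a).
have num_sqr : \sum_i xnext_num a i ^+ 2 = xnext_den a ^+ 2.
  by rewrite sum_sqr_lin unit_xk /xnext_den; ring.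
rewrite /vdot; under eq_bigr do rewrite xnextE -expr2 expr_div_n.
by rewrite -mulr_suml num_sqr divff // expf_neq0.
Qed.

Lemma is_derive_xnext (a : R) i : is_derive a 1 (xnext xk pk ^~ i) (dxnext a i).
Proof.
have den_neq0 := lt0r_neq0 (xnext_den_gt0 a).
have dnum : is_derive a 1 (xnext_num ^~ i) (4 * pk i - 4 * t * xk i - 2 * a * d * xk i).
  rewrite (_ : xnext_num ^~ i = fun b : R =>
      4 * xk i + (4 * pk i - 4 * t * xk i) * b + (- d * xk i) * b ^+ 2).
    by apply: is_derive_eq (is_derive_quadratic _ _ _ _) _; ring.
  by rewrite funeqE => b; rewrite /xnext_num; ring.
have dden : is_derive a 1 xnext_den (2 * a * d).
  rewrite (_ : xnext_den = fun b : R => 4 + 0 * b + d * b ^+ 2).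
    by apply: is_derive_eq (is_derive_quadratic _ _ _ _) _; ring.
  by rewrite funeqE => b; rewrite /xnext_den; ring.
under eq_fun do rewrite xnextE.
apply: is_derive_eq (is_derive_mul dnum (@is_deriveV _ xnext_den a _ 1 den_neq0 dden)) _.
by rewrite /dxnext /GRing.scale /=; field.
Qed.

Lemma xk_in_span_xnext a :
  exists c, forall i, xk i = c * xnext xk pk a i - a * dxnext a i.
Proof.
exists ((4 - a ^+ 2 * d) / xnext_den a) => i.
have := lt0r_neq0 (xnext_den_gt0 a).
rewrite xnextE /dxnext /xnext_num /xnext_den => den_neq0.
by field.
Qed.

End NextIterate.

Unset Implicit Arguments.

Theorem lemma3p4 (R : realType) (n r p : nat)
  (E : {set {set 'I_n}}) (s : {set 'I_n} -> R)
  (xk pk : 'I_n -> R) (alpha : R) :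
  (2 <= r)%N -> (2 <= p)%N ->
  is_weighted_uniform_hypergraph r E s ->
  norm2 xk = 1 -> 0 < alpha ->
  derivable (fun a : R => fobj r p E s (xnext xk pk a)) alpha 1 /\
  alpha * derive1 (fun a : R => fobj r p E s (xnext xk pk a)) alpha
    = - vdot (gradf r p E s (xnext xk pk alpha)) xk.
Proof.
move=> r_ge2 p_ge2 _ xk_norm _.
have unit_xk : vdot xk xk = 1 by rewrite -norm2_sqr xk_norm expr1n.
case: r r_ge2 => [|r] // _; case: p p_ge2 => [|[|p]] // _.
pose Y := xnext xk pk alpha.
have Y_neq0 : exists i, Y i != 0.
  by apply: vdot_self_neq0; rewrite vdot_xnext // oner_neq0.
have [dF F'E] := is_derive_fobj E s r p Y_neq0 (is_derive_xnext pk unit_xk alpha).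
split => //; rewrite derive1E F'E.
have [c xkE] := xk_in_span_xnext pk unit_xk alpha.
set g := gradf r.+1 p.+2 E s Y.
have -> : vdot g xk = c * vdot g Y - alpha * vdot g (dxnext xk pk alpha).
  rewrite /vdot !mulr_sumr -sumrB; apply: eq_bigr => i _.
  by rewrite xkE -/Y; ring.
by rewrite vdot_gradf_self // mulr0 sub0r opprK.
Qed.
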